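(* Let $k$ be a field, let $A$ be a finite-dimensional (associative) $k$-algebra, and let $I$ be a two-sided ideal of $A$. Then $\mathrm{SR}(A/I)\le \mathrm{SR}(A)$.
   Context: For a finite-dimensional $k$-algebra $A$ with basis $e_1,\dots,e_n$ and dual basis $e_1^*,\dots,e_n^*$, its multiplication tensor is $T_A=\sum_{1\le i,j\le n} e_i^*\otimes e_j^*\otimes (e_i e_j)\in A^*\otimes A^*\otimes A$, viewed as a trilinear form on $A\times A\times A^*$. $\mathrm{SR}(A)$ denotes the slice rank of $T_A$. The slice rank of a tensor $T\in U_1\otimes U_2\otimes U_3$ is the smallest $r$ such that $T$ is a sum of $r$ tensors each of the form $u\otimes S$ with $u\in U_1, S\in U_2\otimes U_3$, or $u\in U_2$ times an element of $U_1\otimes U_3$ (suitably placed), or $u\in U_3$ times an element of $U_1\otimes U_2$ (suitably placed). *)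

From HB Require Import structures.
From mathcomp Require Import all_boot all_order all_algebra.
From mathcomp Require Import boolp.
Set Implicit Arguments. Unset Strict Implicit. Unset Printing Implicit Defensive.
Import GRing.Theory.
Local Open Scope ring_scope.

Section SliceRank.
Variable K : fieldType.

Definition lin_form (U : lmodType K) (f : U -> K) : Prop :=
  forall (a : K) (x y : U), f (a *: x + y) = a * f x + f y.

Definition bilin_form (U V : lmodType K) (g : U -> V -> K) : Prop :=
  (forall y, lin_form (fun x => g x y)) /\ (forall x, lin_form (g x)).

Definition has_slice_dec (U1 U2 U3 : lmodType K) (T : U1 -> U2 -> U3 -> K)
  (r : nat) : Prop :=
  exists (r1 r2 r3 : nat)
    (f1 : 'I_r1 -> U1 -> K) (g1 : 'I_r1 -> U2 -> U3 -> K)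
    (f2 : 'I_r2 -> U2 -> K) (g2 : 'I_r2 -> U1 -> U3 -> K)
    (f3 : 'I_r3 -> U3 -> K) (g3 : 'I_r3 -> U1 -> U2 -> K),
    [/\ (r1 + r2 + r3 <= r)%N,
        (forall i, lin_form (f1 i) /\ bilin_form (g1 i)),
        (forall i, lin_form (f2 i) /\ bilin_form (g2 i)),
        (forall i, lin_form (f3 i) /\ bilin_form (g3 i)) &
        forall x y z, T x y z =
          \sum_(i < r1) f1 i x * g1 i y z
        + \sum_(i < r2) f2 i y * g2 i x z
        + \sum_(i < r3) f3 i z * g3 i x y].

Lemma has_slice_dec_ex_bool (U1 U2 U3 : lmodType K) (T : U1 -> U2 -> U3 -> K) :
  (exists n, has_slice_dec T n) -> exists n, `[< has_slice_dec T n >].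
Proof. by case=> n Hn; exists n; apply/asboolP. Qed.

(* slice rank = least r admitting a slice decomposition
   (always exists in finite dimension; default 0 otherwise) *)
Definition slice_rank (U1 U2 U3 : lmodType K) (T : U1 -> U2 -> U3 -> K) : nat :=
  match pselect (exists n, has_slice_dec T n) with
  | left H => ex_minn (has_slice_dec_ex_bool H)
  | right _ => 0%N
  end.

Definition is_kalg (V : vectType K) (mul : V -> V -> V) : Prop :=
  [/\ forall (a : K) (x y z : V), mul (a *: x + y) z = a *: mul x z + mul y z,
      forall (a : K) (x y z : V), mul z (a *: x + y) = a *: mul z x + mul z y,
      associative mul &
      exists e : V, forall x, mul e x = x /\ mul x e = x].

Definition is_ideal (V : vectType K) (mul : V -> V -> V) (I : {vspace V}) : Prop :=
  forall a x, x \in I -> mul a x \in I /\ mul x a \in I.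

Definition dualv (V : vectType K) := 'Hom(V, K^o).

Definition mult_tensor (V : vectType K) (mul : V -> V -> V) :
  V -> V -> dualv V -> K := fun a b phi => phi (mul a b).

Definition SR (V : vectType K) (mul : V -> V -> V) : nat :=
  slice_rank (mult_tensor mul).

Definition is_quotient_alg (V : vectType K) (mul : V -> V -> V) (I : {vspace V})
  (B : vectType K) (mulB : B -> B -> B) (q : V -> B) : Prop :=
  [/\ is_kalg mulB,
      forall (a : K) (x y : V), q (a *: x + y) = a *: q x + q y,
      forall x y, q (mul x y) = mulB (q x) (q y),
      forall b, exists x, q x = b &
      forall x, (q x == 0) = (x \in I)].

End SliceRank.

(** A slice decomposition of a trilinear form [T] pulls back along linear maps
    into its three arguments.  If [s] is a linear section of the quotient map
    [q : A -> A/I], then [T_{A/I}(x, y, psi) = T_A(s x, s y, psi \o q)], since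
    [q] is multiplicative; so every slice decomposition of [T_A] yields one of
    [T_{A/I}] with the same number of terms. *)

From HB Require Import structures.
From mathcomp Require Import all_boot all_order all_algebra.
From mathcomp Require Import boolp.
Set Implicit Arguments. Unset Strict Implicit. Unset Printing Implicit Defensive.
Import GRing.Theory.
Local Open Scope ring_scope.

Lemma linfun_linearE (K : fieldType) (U V : vectType K) (f : U -> V) :
  linear f -> linfun f =1 f.
Proof.
move=> f_lin.
exact: lfunE (HB.pack f (GRing.isLinear.Build _ _ _ _ f f_lin) : {linear U -> V}).
Qed.

Lemma lfunVK_onto (K : fieldType) (U V : vectType K) (f : 'Hom(U, V)) :
  (forall v, exists u, f u = v) -> cancel (f^-1)%VF f.
Proof.
by move=> f_onto v; apply: limg_lfunVK; have [u <-] := f_onto v; rewrite memv_img ?memvf.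
Qed.

Lemma linear_comp_lfunl (K : fieldType) (U V W : vectType K) (f : 'Hom(U, V)) :
  linear (fun g : 'Hom(V, W) => (g \o f)%VF).
Proof. by move=> a g h; rewrite comp_lfunDl comp_lfunZl. Qed.

Section SliceRankPullback.
Variable K : fieldType.

Lemma lin_form_comp (U V : lmodType K) (s : V -> U) (f : U -> K) :
  linear s -> lin_form f -> lin_form (f \o s).
Proof. by move=> s_lin f_lin a x y /=; rewrite s_lin f_lin. Qed.

Lemma bilin_form_comp (U1 U2 V1 V2 : lmodType K) (s : V1 -> U1) (t : V2 -> U2)
    (g : U1 -> U2 -> K) :
  linear s -> linear t -> bilin_form g -> bilin_form (fun x y => g (s x) (t y)).
Proof.
move=> s_lin t_lin [g_linl g_linr]; split=> [y|x] a x1 x2 /=.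
  by rewrite s_lin g_linl.
by rewrite t_lin g_linr.
Qed.

Variables (U1 U2 U3 V1 V2 V3 : lmodType K).
Variables (s1 : V1 -> U1) (s2 : V2 -> U2) (s3 : V3 -> U3).
Hypotheses (s1_lin : linear s1) (s2_lin : linear s2) (s3_lin : linear s3).
Variables (T : U1 -> U2 -> U3 -> K) (T' : V1 -> V2 -> V3 -> K).
Hypothesis T'E : forall x y z, T' x y z = T (s1 x) (s2 y) (s3 z).

Lemma has_slice_dec_comp r : has_slice_dec T r -> has_slice_dec T' r.
Proof.
move=> [r1 [r2 [r3 [f1 [g1 [f2 [g2 [f3 [g3 [r_ge dec1 dec2 dec3 TE]]]]]]]]]].
exists r1, r2, r3,
  (fun i => f1 i \o s1), (fun i y z => g1 i (s2 y) (s3 z)),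
  (fun i => f2 i \o s2), (fun i x z => g2 i (s1 x) (s3 z)),
  (fun i => f3 i \o s3), (fun i x y => g3 i (s1 x) (s2 y)).
split=> // [i|i|i|x y z]; [case: (dec1 i)|case: (dec2 i)|case: (dec3 i)|].
1-3: by move=> f_lin g_bilin; split; [exact: lin_form_comp|exact: bilin_form_comp].
by rewrite T'E TE.
Qed.

End SliceRankPullback.

Section SliceRankTheory.
Variables (K : fieldType) (U1 U2 U3 : lmodType K) (T : U1 -> U2 -> U3 -> K).

Lemma slice_rank_min n : has_slice_dec T n -> (slice_rank T <= n)%N.
Proof.
move=> Tn; rewrite /slice_rank; case: pselect => [Tdec|]; last by case; exists n.
by case: ex_minnP => m _; apply; exact/asboolP.
Qed.

Lemma has_slice_dec_slice_rank n : has_slice_dec T n -> has_slice_dec T (slice_rank T).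
Proof.
move=> Tn; rewrite /slice_rank; case: pselect => [Tdec|]; last by case; exists n.
by case: ex_minnP => m /asboolP.
Qed.

End SliceRankTheory.

Lemma slice_rank_comp (K : fieldType) (U1 U2 U3 V1 V2 V3 : lmodType K)
    (s1 : V1 -> U1) (s2 : V2 -> U2) (s3 : V3 -> U3)
    (T : U1 -> U2 -> U3 -> K) (T' : V1 -> V2 -> V3 -> K) :
  linear s1 -> linear s2 -> linear s3 ->
  (forall x y z, T' x y z = T (s1 x) (s2 y) (s3 z)) ->
  (exists n, has_slice_dec T n) -> (slice_rank T' <= slice_rank T)%N.
Proof.
move=> s1_lin s2_lin s3_lin T'E [n Tn]; apply: slice_rank_min.
apply: (has_slice_dec_comp s1_lin s2_lin s3_lin T'E).
exact: has_slice_dec_slice_rank Tn.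
Qed.

(* Expanding the first argument in a basis [e] gives the slices
   [coord e i x * phi (mul e_i y)]. *)
Lemma has_slice_dec_mult_tensor (K : fieldType) (V : vectType K) (mul : V -> V -> V) :
  (forall y, linear (mul ^~ y)) -> (forall x, linear (mul x)) ->
  has_slice_dec (mult_tensor mul) (\dim {: V}).
Proof.
move=> mul_linl mul_linr; pose e := vbasis {: V}.
exists (\dim {: V}), 0%N, 0%N,
  (fun i => coord e i), (fun i y (phi : dualv V) => phi (mul e`_i y)),
  (fun _ _ => 0), (fun _ _ _ => 0), (fun _ _ => 0), (fun _ _ _ => 0).
split=> [|i|[]|[]|x y phi] //; first by rewrite !addn0.
  split; first by move=> a x1 x2; rewrite linearP.
  split=> [phi|y] a x1 x2 /=; first by rewrite mul_linr linearP.
  by rewrite add_lfunE scale_lfunE.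
rewrite !big_ord0 !addr0 /mult_tensor {1}(coord_vbasis (memvf x)).
rewrite -[mul _ y](linfun_linearE (mul_linl y)) !linear_sum; apply: eq_bigr => i _.
by rewrite !linearZ /= linfun_linearE.
Qed.

Theorem lemma2p2 (k : fieldType) (A : vectType k) (mulA : A -> A -> A)
  (I : {vspace A}) (B : vectType k) (mulB : B -> B -> B) (q : A -> B) :
  is_kalg mulA -> is_ideal mulA I -> is_quotient_alg mulA I mulB q ->
  (SR mulB <= SR mulA)%N.
Proof.
move=> [mulA_linl mulA_linr _ _] _ [_ q_lin q_mul q_onto _].
pose qh := linfun q.
have qhE : qh =1 q := linfun_linearE q_lin.
have qh_onto v : exists u, qh u = v.
  by have [u <-] := q_onto v; exists u; exact: qhE.
pose s := (qh^-1)%VF.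
have qs : cancel s q by move=> v; rewrite -qhE lfunVK_onto.
apply: (@slice_rank_comp _ _ _ _ _ _ _ s s (fun psi => psi \o qh)%VF).
- exact: linearP.
- exact: linearP.
- exact: linear_comp_lfunl.
- by move=> x y psi; rewrite /mult_tensor comp_lfunE qhE q_mul !qs.
- exists (\dim {: A}); apply: has_slice_dec_mult_tensor => [y|x] a x1 x2.
  + exact: mulA_linl.
  + exact: mulA_linr.
Qed.
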